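(* Let $I\times J$ be a dyadic square and let $G_{i,j}$, $1\leq i\leq m$, $1\leq j\leq n$, be nonnegative bounded measurable functions on $I\times J$. Then $$\Big[\prod_{\substack{1\leq i\leq m\\1\leq j\leq n}}G_{i,j}(x_i,y_j)\Big]_{x_1,\ldots,x_m\in I,\ y_1,\ldots,y_n\in J}\leq\prod_{\substack{1\leq i\leq m\\1\leq j\leq n}}\big[G_{i,j}^{\max\{m,n\}}\big]_{I\times J}^{1/\max\{m,n\}}.$$
   Context: $[\cdot]_{x_1,\ldots,x_m\in I,\,y_1,\ldots,y_n\in J}$ denotes the average $\frac{1}{|I|^m|J|^n}\int_{I^m\times J^n}(\cdot)$, and $[G]_{I\times J}$ denotes the average of $G$ over the square $I\times J$. *)

From HB Require Import structures.
From mathcomp Require Import all_boot all_order all_algebra.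
From mathcomp Require Import all_classical all_reals all_analysis.
Set Implicit Arguments. Unset Strict Implicit. Unset Printing Implicit Defensive.
Import Order.TTheory GRing.Theory Num.Theory.
Import numFieldNormedType.Exports.
Local Open Scope classical_set_scope.
Local Open Scope ring_scope.

Definition dyadic_interval {R : realType} (k l : int) : set R :=
  [set x : R | k%:~R * (2%:R ^ l) <= x < (k + 1)%:~R * (2%:R ^ l)].

(* Iterated integral over A^k of F (variables x 0, ..., x (k-1));
   by Tonelli, for nonnegative measurable F this is the integral of F
   over A^k with respect to k-dimensional Lebesgue measure. *)
Fixpoint iter_int {R : realType} (A : set R) (k : nat)
    (F : (nat -> R) -> \bar R) : \bar R :=
  match k with
  | 0 => F (fun _ => 0)
  | k'.+1 => (\int[@lebesgue_measure R]_(t in A)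
                iter_int A k' (fun x => F (fun i => if i == k' then t else x i)))%E
  end.

From HB Require Import structures.
From mathcomp Require Import all_boot all_order all_algebra.
From mathcomp Require Import all_classical all_reals all_analysis.
From mathcomp Require Import measurable_realfun ring lra.
Set Implicit Arguments.
Unset Strict Implicit.
Unset Printing Implicit Defensive.
Import Order.TTheory GRing.Theory Num.Theory.
Import numFieldNormedType.Exports.
Local Open Scope classical_set_scope.
Local Open Scope ring_scope.

(* Let [p = max m n].  The pairs [(i, j)] with [j = i + s (mod p)], [s < p],
   split the [m n] factors [G_{i,j}(x_i, y_j)] into [p] blocks in which no two
   factors share a variable.  Weighted AM-GM bounds the product of the block
   products [T_s] by [prod_s c_s * (1/p) sum_s (T_s / c_s)^p], and the average
   of [T_s^p] over [I^m x J^n] factors into the product of the averages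
   [[G_{i,j}^p]_{I x J}] over the pairs of the block.  Taking for [c_s] the
   product of the corresponding [p]-th roots makes every term of the sum at
   most [1/p]; since [c_s] may vanish, it is first shifted by [d > 0] and then
   [d] tends to [0]. *)

Section integral_complements.
Context d (T : measurableType d) (R : realType).
Variable mu : {measure set T -> \bar R}.

(* Unlike [ge0_le_integral], no measurability is required: both sides are
   suprema of integrals of simple functions. *)
Lemma ge0_le_integral_nomeas (D : set T) (f g : T -> \bar R) :
  (forall x, D x -> (0 <= f x)%E) -> (forall x, D x -> (f x <= g x)%E) ->
  (\int[mu]_(x in D) f x <= \int[mu]_(x in D) g x)%E.
Proof.
move=> f0 fg.
have g0 x : D x -> (0 <= g x)%E by move=> Dx; exact: le_trans (f0 _ Dx) (fg _ Dx).
rewrite !ge0_integralE//.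
apply: ereal_sup_le => _ [s /= sf <-]; exists s => //= x.
apply: le_trans (sf x) _.
by rewrite /patch; case: ifP => // /[1!inE] Dx; exact: fg.
Qed.

Lemma integral_setT_vanishing_off (A : set T) (f : T -> \bar R) :
  (forall t, ~ A t -> f t = 0%E) ->
  (\int[mu]_(t in A) f t = \int[mu]_t f t)%E.
Proof.
move=> f0; rewrite integral_mkcond; apply: eq_integral => t _.
by rewrite /patch; case: ifPn => // /negP; rewrite inE => /f0.
Qed.

Lemma integral_ge0_le_bound (A : set T) (mA : measurable A) (a c : R)
    (f : T -> R) :
  mu A = a%:E -> (forall t, A t -> 0 <= f t <= c) ->
  (0 <= \int[mu]_(t in A) (f t)%:E <= (c * a)%:E)%E.
Proof.
move=> muA f0c; apply/andP; split.
  by apply: integral_ge0 => t /f0c /andP[f0 _]; rewrite lee_fin.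
apply: le_trans (ge0_le_integral_nomeas (g := fun=> c%:E) _ _) _.
- by move=> t /f0c /andP[f0 _]; rewrite lee_fin.
- by move=> t /f0c /andP[_ fc]; rewrite lee_fin.
by rewrite integral_cst // muA EFinM.
Qed.

Lemma integral_prod_at_most_one (A : set T) (mA : measurable A) (a : R) (k : nat)
    (e : nat -> bool) (g : nat -> T -> R) (u : nat -> R) :
  mu A = a%:E -> 0 < a ->
  (forall i1 i2, (i1 < k)%N -> (i2 < k)%N -> e i1 -> e i2 -> i1 = i2) ->
  (forall i, (i < k)%N -> e i -> (\int[mu]_(t in A) (g i t)%:E = (u i)%:E)%E) ->
  (\int[mu]_(t in A) (\prod_(i < k) (if e i then g i t else 1))%:E =
    (a * \prod_(i < k) (if e i then u i / a else 1))%:E)%E.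
Proof.
move=> muA a0 e_uniq gu.
case: (pickP (fun i : 'I_k => e i)) => [i0 ei0 | none].
  have prod_at_i0 (F : nat -> R) : \prod_(i < k) (if e i then F i else 1) = F i0.
    rewrite (bigD1 i0) //= ei0 big1 ?mulr1 // => j ji0.
    case ej: (e j) => //; exfalso; move/negP: ji0; apply.
    by apply/eqP/val_inj; apply: e_uniq; rewrite ?ltn_ord ?ej.
  under eq_integral => t _ do rewrite (prod_at_i0 (g^~ t)).
  by rewrite gu // (prod_at_i0 (fun i => u i / a)) mulrC divfK // gt_eqF.
have prod1 (F : nat -> R) : \prod_(i < k) (if e i then F i else 1) = 1.
  by rewrite big1 // => i _; rewrite none.
under eq_integral => t _ do rewrite (prod1 (g^~ t)).
by rewrite integral_cst // muA mul1e (prod1 (fun i => u i / a)) mulr1.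
Qed.

End integral_complements.

Section iterated_integral.
Variable R : realType.
Implicit Types (A : set R) (F G : (nat -> R) -> \bar R).

Lemma eq_iter_int A k F G :
  (forall x, (forall i, (i < k)%N -> A (x i)) -> F x = G x) ->
  iter_int A k F = iter_int A k G.
Proof.
elim: k F G => [|k IH] F G FG /=; first exact: FG.
apply: eq_integral => t /[1!inE] At; apply: IH => x Ax; apply: FG => i.
case: eqP => [//|/eqP ik]; rewrite ltnS leq_eqVlt (negbTE ik) /=; exact: Ax.
Qed.

Lemma iter_int_ge0 A k F :
  (forall x, (forall i, (i < k)%N -> A (x i)) -> (0 <= F x)%E) ->
  (0 <= iter_int A k F)%E.
Proof.
elim: k F => [|k IH] F F0 /=; first exact: F0.
apply: integral_ge0 => t At; apply: IH => x Ax; apply: F0 => i.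
case: eqP => [//|/eqP ik]; rewrite ltnS leq_eqVlt (negbTE ik) /=; exact: Ax.
Qed.

Lemma ge0_le_iter_int A k F G :
  (forall x, (forall i, (i < k)%N -> A (x i)) -> (0 <= F x)%E /\ (F x <= G x)%E) ->
  (iter_int A k F <= iter_int A k G)%E.
Proof.
elim: k F G => [|k IH] F G FG /=; first exact: (FG _ _).2.
have At_ext t : A t -> forall x, (forall i, (i < k)%N -> A (x i)) ->
    forall i, (i < k.+1)%N -> A (if i == k then t else x i).
  move=> At x Ax i; case: eqP => [//|/eqP ik].
  by rewrite ltnS leq_eqVlt (negbTE ik) /=; exact: Ax.
apply: ge0_le_integral_nomeas => t At.
  by apply: iter_int_ge0 => x Ax; apply: (FG _ (At_ext t At x Ax)).1.
by apply: IH => x Ax; apply: FG; apply: At_ext.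
Qed.

Lemma iter_int_sum_prod A (mA : measurable A) (S : nat) (c : 'I_S -> R)
    (f : 'I_S -> nat -> R -> R) (v : 'I_S -> nat -> R) k :
  (forall s, 0 <= c s) ->
  (forall s i, measurable_fun A (f s i)) ->
  (forall s i t, A t -> 0 <= f s i t) ->
  (forall s i, (\int[lebesgue_measure]_(t in A) (f s i t)%:E = (v s i)%:E)%E) ->
  iter_int A k (fun x => (\sum_s c s * \prod_(i < k) f s i (x i))%:E) =
  (\sum_s c s * \prod_(i < k) v s i)%:E.
Proof.
move=> + mf f0 fv.
have v0 s i : 0 <= v s i.
  by rewrite -lee_fin -fv; apply: integral_ge0 => t At; rewrite lee_fin f0.
elim: k c => [|k IH] c c0 /=.
  by congr (_%:E); apply: eq_bigr => s _; rewrite !big_ord0.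
transitivity (\int[lebesgue_measure]_(t in A)
   (\sum_s (c s * \prod_(i < k) v s i) * f s k t)%:E)%E.
  apply: eq_integral => t /[1!inE] At.
  rewrite (_ : (fun x => _) = (fun x : nat -> R =>
     (\sum_s (c s * f s k t) * \prod_(i < k) f s i (x i))%:E)); last first.
    apply/funext => x; congr (_%:E); apply: eq_bigr => s _.
    rewrite big_ord_recr /= eqxx.
    under eq_bigr => i _ do rewrite (ltn_eqF (ltn_ord i)).
    by rewrite mulrAC mulrA.
  rewrite IH; last by move=> s; rewrite mulr_ge0 ?f0.
  by congr (_%:E); apply: eq_bigr => s _; rewrite mulrAC.
under eq_integral do rewrite -sumEFin.
rewrite ge0_integral_sum //; last first.
  - by move=> s t At; rewrite lee_fin !mulr_ge0 ?f0 ?prodr_ge0.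
  - by move=> s; apply/measurable_EFinP; apply: measurable_funM => //; exact: mf.
rewrite -sumEFin; apply: eq_bigr => s _.
under eq_integral do rewrite EFinM.
rewrite ge0_integralZl_EFin //; first by rewrite fv -EFinM big_ord_recr /= mulrA.
- by move=> t At; rewrite lee_fin f0.
- by apply/measurable_EFinP; exact: mf.
- by rewrite mulr_ge0 // prodr_ge0.
Qed.

End iterated_integral.

Section real_inequalities.
Variable R : realFieldType.

Lemma prod_le_mean_expn (p : nat) (T : 'I_p -> R) : (0 < p)%N ->
  (forall s, 0 <= T s) -> \prod_s T s <= (\sum_s T s ^+ p) / p%:R.
Proof.
move=> p0 T0.
have := (leif_AGM (A := predT) (E := fun s => T s ^+ p) _).1.
rewrite cardT size_enum_ord prodrXl ler_pXn2r //.
- by apply; move=> s _; exact: exprn_ge0.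
- by rewrite qualifE /= prodr_ge0.
- by rewrite qualifE /= divr_ge0 // sumr_ge0 // => s _; exact: exprn_ge0.
Qed.

Lemma prod_le_scaled_mean_expn (p : nat) (T c : 'I_p -> R) : (0 < p)%N ->
  (forall s, 0 <= T s) -> (forall s, 0 < c s) ->
  \prod_s T s <= \prod_s c s * ((\sum_s (T s / c s) ^+ p) / p%:R).
Proof.
move=> p0 T0 c0.
have -> : \prod_s T s = \prod_s c s * \prod_s (T s / c s).
  by rewrite -big_split /=; apply: eq_bigr => s _; rewrite mulrC divfK // gt_eqF.
apply: ler_wpM2l; first by apply: prodr_ge0 => s _; exact: ltW.
by apply: prod_le_mean_expn => // s; rewrite divr_ge0 // ltW.
Qed.

Lemma prod_addr_le (I : Type) (r : seq I) (b : I -> R) (d : R) :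
  (forall i, 0 <= b i) -> 0 <= d -> d <= 1 ->
  \prod_(i <- r) (b i + d) <= \prod_(i <- r) b i + d * \prod_(i <- r) (2 * (b i + 1)).
Proof.
move=> b0 d0 d1; elim: r => [|x r IH]; first by rewrite !big_nil mulr1 lerDl.
rewrite !big_cons.
set Q := \prod_(i <- r) b i; set D := \prod_(i <- r) (2 * (b i + 1)).
have Q0 : 0 <= Q by apply: prodr_ge0.
have QD : Q <= D by apply: ler_prod => i _; rewrite b0 /=; have := b0 i; lra.
have D0 : 0 <= D by apply: le_trans QD.
have bx := b0 x.
apply: (le_trans (y := (b x + d) * (Q + d * D))); first by rewrite ler_wpM2l //; lra.
have h1 : d * Q <= d * D by rewrite ler_wpM2l.
have h2 : d * (d * D) <= 1 * (d * D) by rewrite ler_wpM2r // mulr_ge0.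
have h3 : 0 <= b x * (d * D) by rewrite !mulr_ge0.
nra.
Qed.

Lemma le_prod_of_le_prod_addr (p : nat) (b : 'I_p -> R) (L : R) :
  (forall s, 0 <= b s) ->
  (forall d, 0 < d -> d <= 1 -> L <= \prod_s (b s + d)) -> L <= \prod_s b s.
Proof.
move=> b0 Lb; apply/ler_addgt0Pr => e e0.
set D := \prod_s (2 * (b s + 1)).
have D0 : 0 < D by apply: prodr_gt0 => s _; have := b0 s; lra.
pose d := Num.min 1 (e / D).
have d0 : 0 < d by rewrite lt_min ltr01 divr_gt0.
have d1 : d <= 1 by rewrite ge_min lexx.
have dD : d * D <= e by rewrite -ler_pdivlMr // ge_min lexx orbT.
apply: le_trans (Lb d d0 d1) _.
apply: le_trans (prod_addr_le (index_enum 'I_p) b0 (ltW d0) d1) _.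
by rewrite lerD2l.
Qed.

End real_inequalities.

Section dyadic_interval.
Variable R : realType.

Lemma dyadic_intervalE (k l : int) : @dyadic_interval R k l =
  [set` Interval (BLeft (k%:~R * 2%:R ^ l)) (BLeft ((k + 1)%:~R * 2%:R ^ l))].
Proof. by apply/funext => x /=; rewrite in_itv. Qed.

Lemma measurable_dyadic_interval (k l : int) : measurable (@dyadic_interval R k l).
Proof. by rewrite dyadic_intervalE; exact: measurable_itv. Qed.

Lemma lebesgue_measure_dyadic_interval (k l : int) :
  lebesgue_measure (@dyadic_interval R k l) = (2%:R ^ l : R)%:E.
Proof.
have l0 : 0 < (2%:R ^ l : R) by apply: exprz_gt0.
rewrite dyadic_intervalE lebesgue_measure_itv /= lte_fin intrD mulrDl mul1r.
by rewrite ltrDl l0 /= -EFinD addrAC subrr add0r.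
Qed.

End dyadic_interval.

(* The pairs [(i, j)] with [j = i + s mod p] form, for fixed [s], a partial
   matching of rows and columns; as [s] ranges over ['I_p] each pair with
   [i, j < p] is matched exactly once (a cyclic Latin square). *)
Definition cyclic_match (p s i j : nat) : bool := ((i + s) %% p == j)%N.

Lemma cyclic_match_injl (p s i1 i2 j : nat) : (i1 < p)%N -> (i2 < p)%N ->
  cyclic_match p s i1 j -> cyclic_match p s i2 j -> i1 = i2.
Proof.
move=> i1p i2p /eqP e1 /eqP e2.
have : (i1 == i2 %[mod p])%N by rewrite -(eqn_modDr s) e1 e2.
by rewrite !modn_small // => /eqP.
Qed.

Lemma cyclic_match_injr (p s i j1 j2 : nat) :
  cyclic_match p s i j1 -> cyclic_match p s i j2 -> j1 = j2.
Proof. by move=> /eqP <- /eqP <-. Qed.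

Lemma prod_cyclic_match (S : comPzRingType) (p i j : nat) (a : S) :
  (i < p)%N -> (j < p)%N ->
  \prod_(s < p) (if cyclic_match p s i j then a else 1) = a.
Proof.
move=> ip jp; have p0 : (0 < p)%N by apply: leq_ltn_trans ip.
pose s0 : 'I_p := Ordinal (ltn_pmod (j + (p - i)) p0).
have match_s0 : cyclic_match p s0 i j.
  rewrite /cyclic_match /= modnDmr addnCA subnKC; last exact: ltnW.
  by rewrite modnDr modn_small.
rewrite (bigD1 s0) // match_s0 big1 => [|s /andP[_ ss0]]; first exact: mulr1.
case: ifP => // /eqP match_s; exfalso; move/negP: ss0; apply.
have : (s == s0 %[mod p])%N by rewrite -(eqn_modDl i) match_s (eqP match_s0).
by rewrite !modn_small // => /eqP eq_s; apply/eqP/val_inj.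
Qed.

Section block_decomposition.
Variable R : realType.
Local Notation mu := (@lebesgue_measure R).

Variables (I J : set R) (hI hJ M : R) (m n p : nat) (G : nat -> nat -> R -> R -> R).
Hypotheses (mI : measurable I) (mJ : measurable J)
  (muI : mu I = hI%:E) (muJ : mu J = hJ%:E) (hI0 : 0 < hI) (hJ0 : 0 < hJ)
  (p0 : (0 < p)%N) (mp : (m <= p)%N) (np : (n <= p)%N)
  (G0 : forall i j x y, 0 <= G i j x y) (GM : forall i j x y, G i j x y <= M)
  (G_outl : forall i j x y, ~ I x -> G i j x y = 0)
  (G_outr : forall i j x y, ~ J y -> G i j x y = 0)
  (mG : forall i j, measurable_fun setT (fun z : R * R => G i j z.1 z.2)).

Let Gp i j x y := G i j x y ^+ p.

Let Gp_ge0 i j x y : 0 <= Gp i j x y.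
Proof. exact: exprn_ge0. Qed.

Let Gp_bound i j x y : 0 <= Gp i j x y <= M ^+ p.
Proof.
have M0 : 0 <= M by exact: le_trans (G0 0 0 0 0) (GM 0 0 0 0).
by rewrite Gp_ge0 /Gp lerXn2r // ?nnegrE ?G0.
Qed.

Let measurable_Gp i j : measurable_fun setT (fun z : R * R => Gp i j z.1 z.2).
Proof. exact: measurable_funX. Qed.

Let measurable_EGp i j :
  measurable_fun setT (fun z : R * R => (Gp i j z.1 z.2)%:E).
Proof. exact/measurable_EFinP. Qed.

Let inner i j x := fine (\int[mu]_(y in J) (Gp i j x y)%:E)%E.

Let inner_integral_bound i j x :
  (0 <= \int[mu]_(y in J) (Gp i j x y)%:E <= (M ^+ p * hJ)%:E)%E.
Proof. by apply: integral_ge0_le_bound => // y _; exact: Gp_bound. Qed.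

Let innerE i j x : (inner i j x)%:E = (\int[mu]_(y in J) (Gp i j x y)%:E)%E.
Proof.
have /andP[int0 intM] := inner_integral_bound i j x.
by rewrite fineK // ge0_fin_numE // (le_lt_trans intM) ?ltry.
Qed.

Let inner_bound i j x : 0 <= inner i j x <= M ^+ p * hJ.
Proof. by rewrite -!lee_fin innerE inner_integral_bound. Qed.

Let inner_setT i j x :
  (\int[mu]_(y in J) (Gp i j x y)%:E = \int[mu]_y (Gp i j x y)%:E)%E.
Proof.
by apply: integral_setT_vanishing_off => y Jy; rewrite /Gp G_outr // expr0n gtn_eqF.
Qed.

Let measurable_inner i j : measurable_fun setT (inner i j).
Proof.
have := @measurable_fun_fubini_tonelli_F _ _ (measurableTypeR R) (measurableTypeR R)
  R mu _ (measurable_EGp i j) (fun z => Gp_ge0 i j z.1 z.2).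
move=> /(measurableT_comp (fine_measurable measurableT)).
by apply: eq_measurable_fun => x _; rewrite /inner inner_setT.
Qed.

Let total i j := fine (\int[mu \x mu]_z (Gp i j z.1 z.2)%:E)%E.

Let total_fubini i j :
  (\int[mu \x mu]_z (Gp i j z.1 z.2)%:E = \int[mu]_(x in I) (inner i j x)%:E)%E.
Proof.
rewrite (@fubini_tonelli1 _ _ (measurableTypeR R) (measurableTypeR R) R mu mu _
  (measurable_EGp i j) (fun z => Gp_ge0 i j z.1 z.2)).
rewrite [RHS]integral_setT_vanishing_off; last first.
  move=> x Ix; rewrite /inner inner_setT.
  under eq_integral do rewrite /Gp G_outl // expr0n gtn_eqF //.
  by rewrite integral0.
by apply: eq_integral => x _; rewrite innerE inner_setT.
Qed.

Let totalE i j : (\int[mu]_(x in I) (inner i j x)%:E = (total i j)%:E)%E.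
Proof.
have /andP[int0 intM] : (0 <= \int[mu]_(x in I) (inner i j x)%:E
    <= (M ^+ p * hJ * hI)%:E)%E.
  by apply: integral_ge0_le_bound => // x _; exact: inner_bound.
by rewrite /total total_fubini fineK // ge0_fin_numE // (le_lt_trans intM) ?ltry.
Qed.

Let total_ge0 i j : 0 <= total i j.
Proof.
by rewrite -lee_fin -totalE; apply: integral_ge0 => x _; rewrite lee_fin; case/andP: (inner_bound i j x).
Qed.

Let total_setX i j :
  (\int[mu \x mu]_(z in I `*` J) (G i j z.1 z.2 ^+ p)%:E = (total i j)%:E)%E.
Proof.
rewrite -totalE -total_fubini integral_setT_vanishing_off // => z IJz.
have [Iz|nIz] := pselect (I z.1); last by rewrite G_outl // expr0n gtn_eqF.
have [Jz|nJz] := pselect (J z.2); last by rewrite G_outr // expr0n gtn_eqF.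
by case: IJz.
Qed.

Let prod_cyclic i j (a : R) : (i < m)%N -> (j < n)%N ->
  \prod_(s < p) (if cyclic_match p s i j then a else 1) = a.
Proof.
by move=> im jn; apply: prod_cyclic_match; [exact: leq_trans im mp | exact: leq_trans jn np].
Qed.

Let prod_le_block_sum (c : 'I_p -> R) (x y : nat -> R) : (forall s, 0 < c s) ->
  \prod_(i < m) \prod_(j < n) G i j (x i) (y j) <=
  \sum_(s < p) ((\prod_t c t) / p%:R / c s ^+ p) *
     \prod_(j < n) \prod_(i < m)
       (if cyclic_match p s i j then Gp i j (x i) (y j) else 1).
Proof.
move=> c0.
pose T s := \prod_(i < m) \prod_(j < n)
  (if cyclic_match p s i j then G i j (x i) (y j) else 1).
have -> : \prod_(i < m) \prod_(j < n) G i j (x i) (y j) = \prod_(s < p) T s.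
  apply/esym; rewrite /T exchange_big /=; apply: eq_bigr => i _.
  by rewrite exchange_big /=; apply: eq_bigr => j _; rewrite prod_cyclic.
have T0 s : 0 <= T s.
  by apply: prodr_ge0 => i _; apply: prodr_ge0 => j _; case: ifP.
apply: le_trans (prod_le_scaled_mean_expn p0 T0 c0) _.
rewrite mulr_suml mulr_sumr; apply: ler_sum => s _; rewrite expr_div_n.
have -> : T s ^+ p = \prod_(j < n) \prod_(i < m)
    (if cyclic_match p s i j then Gp i j (x i) (y j) else 1).
  rewrite /T -prodrXl; under eq_bigr do rewrite -prodrXl.
  rewrite exchange_big /=; apply: eq_bigr => j _; apply: eq_bigr => i _.
  by case: ifP; rewrite ?expr1n.
by rewrite le_eqVlt; apply/orP; left; apply/eqP; ring.
Qed.

Let row_factor s i t :=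
  \prod_(j < n) (if cyclic_match p s i j then inner i j t / hJ else 1).

Let iter_int_inner_blocks (w : 'I_p -> R) (x : nat -> R) : (forall s, 0 <= w s) ->
  iter_int J n (fun y => (\sum_s w s * \prod_(j < n) \prod_(i < m)
      (if cyclic_match p s i j then Gp i j (x i) (y j) else 1))%:E) =
  (\sum_s (w s * hJ ^+ n) * \prod_(i < m) row_factor s i (x i))%:E.
Proof.
move=> w0.
rewrite (@iter_int_sum_prod R J mJ p w
  (fun s j t => \prod_(i < m) (if cyclic_match p s i j then Gp i j (x i) t else 1))
  (fun s j => hJ * \prod_(i < m)
     (if cyclic_match p s i j then inner i j (x i) / hJ else 1)) n w0).
- congr (_%:E); apply: eq_bigr => s _.
  rewrite prodrMl card_ord mulrA; congr (_ * _).
  by rewrite /row_factor exchange_big.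
- move=> s j; apply: measurable_prod => i _; case: (cyclic_match p s i j).
    exact: measurable_funS (measurable_fun_pair2 _ (measurable_Gp i j)).
  exact: measurable_cst.
- by move=> s j t _; apply: prodr_ge0 => i _; case: ifP.
- move=> s j.
  apply: (@integral_prod_at_most_one _ _ R mu J mJ hJ m (fun i => cyclic_match p s i j)
    (fun i t => Gp i j (x i) t) (fun i => inner i j (x i)) muJ hJ0).
  + by move=> i1 i2 i1m i2m; apply: cyclic_match_injl;
      [exact: leq_trans i1m mp | exact: leq_trans i2m mp].
  + by move=> i _ _; rewrite innerE.
Qed.

Let avg i j := total i j / hJ / hI.

Let block_avg s :=
  \prod_(i < m) \prod_(j < n) (if cyclic_match p s i j then avg i j else 1).

Let iter_int_outer_blocks (w : 'I_p -> R) : (forall s, 0 <= w s) ->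
  iter_int I m (fun x => (\sum_s w s * \prod_(i < m) row_factor s i (x i))%:E) =
  (\sum_s (w s * hI ^+ m) * block_avg s)%:E.
Proof.
move=> w0.
rewrite (@iter_int_sum_prod R I mI p w row_factor
  (fun s i => hI * \prod_(j < n) (if cyclic_match p s i j then avg i j else 1)) m w0).
- congr (_%:E); apply: eq_bigr => s _.
  by rewrite prodrMl card_ord mulrA.
- move=> s i; apply: measurable_prod => j _; case: (cyclic_match p s i j).
    exact: measurable_funM (measurable_funS _ _ (measurable_inner i j)) (measurable_cst _).
  exact: measurable_cst.
- move=> s i t _; apply: prodr_ge0 => j _; case: ifP => // _.
  by rewrite divr_ge0 ?(ltW hJ0) //; case/andP: (inner_bound i j t).
- move=> s i.
  apply: (@integral_prod_at_most_one _ _ R mu I mI hI n (fun j => cyclic_match p s i j)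
    (fun j t => inner i j t / hJ) (fun j => total i j / hJ) muI hI0).
  + by move=> j1 j2 _ _; apply: cyclic_match_injr.
  + move=> j _ _.
    under eq_integral do rewrite EFinM muleC.
    rewrite ge0_integralZl_EFin //; first by rewrite totalE -EFinM mulrC.
    * by move=> t _; rewrite lee_fin; case/andP: (inner_bound i j t).
    * by apply/measurable_EFinP; exact: measurable_funS (measurable_inner i j).
    * by rewrite invr_ge0 ltW.
Qed.

Let lhs := iter_int I m (fun x => iter_int J n (fun y =>
  (\prod_(i < m) \prod_(j < n) G i j (x i) (y j))%:E)).

Let lhs_ge0 : (0 <= lhs)%E.
Proof.
apply: iter_int_ge0 => x _; apply: iter_int_ge0 => y _; rewrite lee_fin.
by apply: prodr_ge0 => i _; apply: prodr_ge0 => j _; exact: G0.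
Qed.

Let le_sum_block_avg (c : 'I_p -> R) : (forall s, 0 < c s) ->
  ((hI ^+ m * hJ ^+ n)^-1%:E * lhs <=
    (\sum_s ((\prod_t c t) / p%:R / c s ^+ p) * block_avg s)%:E)%E.
Proof.
move=> c0.
set w := fun s : 'I_p => (\prod_t c t) / p%:R / c s ^+ p.
have cprod0 : 0 < \prod_t c t by apply: prodr_gt0 => t _; exact: c0.
have w0 s : 0 <= w s.
  apply: divr_ge0; first by apply: divr_ge0; [exact: ltW | exact: ler0n].
  by apply: exprn_ge0; exact: ltW.
have : (lhs <= iter_int I m (fun x =>
    (\sum_s (w s * hJ ^+ n) * \prod_(i < m) row_factor s i (x i))%:E))%E.
  apply: ge0_le_iter_int => x _; split.
    apply: iter_int_ge0 => y _; rewrite lee_fin.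
    by apply: prodr_ge0 => i _; apply: prodr_ge0 => j _; exact: G0.
  rewrite -iter_int_inner_blocks //; apply: ge0_le_iter_int => y _; split.
    by rewrite lee_fin; apply: prodr_ge0 => i _; apply: prodr_ge0 => j _; exact: G0.
  by rewrite lee_fin; exact: prod_le_block_sum.
rewrite iter_int_outer_blocks => [lhs_le|s]; last by rewrite mulr_ge0 // exprn_ge0 // ltW.
apply: le_trans (lee_wpmul2l _ lhs_le) _.
  by rewrite lee_fin invr_ge0 mulr_ge0 ?exprn_ge0 ?ltW.
rewrite -EFinM lee_fin mulr_sumr le_eqVlt; apply/orP; left; apply/eqP.
apply: eq_bigr => s _.
have -> : w s * hJ ^+ n * hI ^+ m * block_avg s =
    (hI ^+ m * hJ ^+ n) * (w s * block_avg s) by ring.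
by rewrite mulKf // mulf_neq0 // expf_neq0 // gt_eqF.
Qed.

Let root i j := avg i j `^ p%:R^-1.

Let block_root s :=
  \prod_(i < m) \prod_(j < n) (if cyclic_match p s i j then root i j else 1).

Let block_root_ge0 s : 0 <= block_root s.
Proof.
by apply: prodr_ge0 => i _; apply: prodr_ge0 => j _; case: ifP => // _; exact: powR_ge0.
Qed.

Let block_root_expn s : block_root s ^+ p = block_avg s.
Proof.
have avg0 i j : 0 <= avg i j.
  by apply: divr_ge0; [apply: divr_ge0; [exact: total_ge0 | exact: ltW] | exact: ltW].
rewrite -prodrXl; apply: eq_bigr => i _; rewrite -prodrXl; apply: eq_bigr => j _.
case: ifP => _; last exact: expr1n.
rewrite /root -powR_mulrn ?powR_ge0 // -powRrM mulVf ?powRr1 //.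
by rewrite pnatr_eq0 -lt0n.
Qed.

Let prod_block_root : \prod_(s < p) block_root s = \prod_(i < m) \prod_(j < n) root i j.
Proof.
rewrite exchange_big /=; apply: eq_bigr => i _.
by rewrite exchange_big /=; apply: eq_bigr => j _; rewrite prod_cyclic.
Qed.

(* With [c s := block_root s + d] each of the [p] terms of [le_sum_block_avg]
   is at most [C / p], where [C] is the product of the weights. *)
Let le_prod_block_root_addr d : 0 < d ->
  ((hI ^+ m * hJ ^+ n)^-1%:E * lhs <= (\prod_(s < p) (block_root s + d))%:E)%E.
Proof.
move=> d0; have c0 s : 0 < block_root s + d by rewrite ltr_wpDl.
apply: le_trans (le_sum_block_avg c0) _; rewrite lee_fin.
set C := \prod_(t < p) (block_root t + d).
have -> : \sum_(s < p) (C / p%:R / (block_root s + d) ^+ p) * block_avg s =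
    C / p%:R * \sum_(s < p) (block_root s / (block_root s + d)) ^+ p.
  rewrite mulr_sumr; apply: eq_bigr => s _.
  by rewrite -block_root_expn expr_div_n mulrA mulrAC.
have p0R : 0 < p%:R :> R by rewrite ltr0n.
apply: le_trans (_ : C / p%:R * \sum_(s < p) 1 <= C); last first.
  by rewrite sumr_const card_ord divfK ?gt_eqF.
apply: ler_wpM2l.
  by apply: divr_ge0 (ltW p0R); apply: prodr_ge0 => s _; exact: ltW.
apply: ler_sum => s _; apply: exprn_ile1; first by rewrite divr_ge0 // ltW.
by rewrite ler_pdivrMr // mul1r lerDl ltW.
Qed.

Lemma iter_int_prod_le_prod_mean_root :
  ((hI ^+ m * hJ ^+ n)^-1%:E *
     iter_int I m (fun x => iter_int J n (fun y =>
       (\prod_(i < m) \prod_(j < n) G i j (x i) (y j))%:E))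
   <= \prod_(i < m) \prod_(j < n)
        ((hI * hJ)^-1%:E *
          \int[mu \x mu]_(z in I `*` J) (G i j z.1 z.2 ^+ p)%:E) `^ p%:R^-1)%E.
Proof.
have -> : (\prod_(i < m) \prod_(j < n) ((hI * hJ)^-1%:E *
    \int[mu \x mu]_(z in I `*` J) (G i j z.1 z.2 ^+ p)%:E) `^ p%:R^-1 =
    (\prod_(i < m) \prod_(j < n) root i j)%:E)%E.
  rewrite -prodEFin; apply: eq_bigr => i _; rewrite -prodEFin; apply: eq_bigr => j _.
  by rewrite total_setX -EFinM poweR_EFin /root /avg mulrC invfM mulrA mulrAC.
have lhs_fin : ((hI ^+ m * hJ ^+ n)^-1%:E * lhs)%E \is a fin_num.
  rewrite ge0_fin_numE; last by rewrite mule_ge0 // lee_fin invr_ge0 mulr_ge0 // exprn_ge0 // ltW.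
  exact: le_lt_trans (le_prod_block_root_addr ltr01) (ltry _).
rewrite -(fineK lhs_fin) lee_fin -prod_block_root.
apply: le_prod_of_le_prod_addr => [s|d d0 _]; first exact: block_root_ge0.
by rewrite -lee_fin fineK //; exact: le_prod_block_root_addr.
Qed.

End block_decomposition.

Lemma finite_family_common_bound (T : finType) (A : Type) (R : realDomainType)
    (f : T -> A -> R) (P : A -> Prop) :
  (forall t, exists M, forall a, P a -> f t a <= M) ->
  exists2 M, 0 <= M & forall t a, P a -> f t a <= M.
Proof.
move=> /choice[Mf fMf]; exists (\sum_t `|Mf t|); first exact: sumr_ge0.
move=> t a Pa; apply: le_trans (fMf t a Pa) _; apply: le_trans (ler_norm _) _.
by rewrite (bigD1 t) //= lerDl sumr_ge0.
Qed.

Section zero_extension.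
Variables (R : realType) (m n : nat) (I J : set R) (G : 'I_m -> 'I_n -> R -> R -> R).

(* Indexed by [nat], as the variables of [iter_int] are. *)
Definition zero_ext (i j : nat) (x y : R) : R :=
  if (insub i : option 'I_m) is Some i' then
    if (insub j : option 'I_n) is Some j' then
      if (x \in I) && (y \in J) then G i' j' x y else 0
    else 0
  else 0.

Lemma zero_extE (i : 'I_m) (j : 'I_n) x y : I x -> J y -> zero_ext i j x y = G i j x y.
Proof. by move=> Ix Jy; rewrite /zero_ext !valK (mem_set Ix) (mem_set Jy). Qed.

Lemma zero_ext_outl i j x y : ~ I x -> zero_ext i j x y = 0.
Proof.
move=> Ix; rewrite /zero_ext; case: (insub i) => // i'; case: (insub j) => // j'.
by case: ifP => // /andP[/set_mem].
Qed.

Lemma zero_ext_outr i j x y : ~ J y -> zero_ext i j x y = 0.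
Proof.
move=> Jy; rewrite /zero_ext; case: (insub i) => // i'; case: (insub j) => // j'.
by case: ifP => // /andP[_ /set_mem].
Qed.

Lemma zero_ext_ge0 : (forall i j x y, I x -> J y -> 0 <= G i j x y) ->
  forall i j x y, 0 <= zero_ext i j x y.
Proof.
move=> G0 i j x y; rewrite /zero_ext; case: (insub i) => // i'; case: (insub j) => // j'.
by case: ifP => // /andP[/set_mem Ix /set_mem Jy]; exact: G0.
Qed.

Lemma zero_ext_le (M : R) : (forall i j x y, I x -> J y -> G i j x y <= M) -> 0 <= M ->
  forall i j x y, zero_ext i j x y <= M.
Proof.
move=> GM M0 i j x y; rewrite /zero_ext; case: (insub i) => // i'; case: (insub j) => // j'.
by case: ifP => // /andP[/set_mem Ix /set_mem Jy]; exact: GM.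
Qed.

Lemma measurable_zero_ext : measurable I -> measurable J ->
  (forall i j, measurable_fun (I `*` J) (fun z : R * R => G i j z.1 z.2)) ->
  forall i j, measurable_fun setT (fun z : R * R => zero_ext i j z.1 z.2).
Proof.
move=> mI mJ mG i j; rewrite /zero_ext.
case: (insub i) => [i'|]; last exact: measurable_cst.
case: (insub j) => [j'|]; last exact: measurable_cst.
have := (measurable_restrictT _ (measurableX mI mJ)).1 (mG i' j').
by apply: eq_measurable_fun => z _; rewrite /patch in_setX.
Qed.

End zero_extension.

Theorem lemma2 (R : realType) (k1 k2 l : int) (m n : nat)
  (G : 'I_m -> 'I_n -> R -> R -> R) :
  let I := @dyadic_interval R k1 l in
  let J := @dyadic_interval R k2 l in
  let h : R := 2%:R ^ l in
  let p : nat := maxn m n in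
  (forall i j, forall x y, I x -> J y -> 0 <= G i j x y) ->
  (forall i j, exists M : R, forall x y, I x -> J y -> G i j x y <= M) ->
  (forall i j, measurable_fun (I `*` J) (fun z : R * R => G i j z.1 z.2)) ->
  ((h ^+ (m + n))^-1%:E *
     iter_int I m (fun x => iter_int J n (fun y =>
       \prod_(i < m) \prod_(j < n) (G i j (x i) (y j))%:E))
   <= \prod_(i < m) \prod_(j < n)
        (((h ^+ 2)^-1)%:E *
          \int[(@lebesgue_measure R \x @lebesgue_measure R)]_(z in I `*` J)
             ((G i j z.1 z.2) ^+ p)%:E) `^ (p%:R^-1))%E.
Proof.
move=> I J h p G0 GM mG.
have [p0|p_gt0] := posnP p.
  have /andP[/eqP m0 /eqP n0] : (m == 0) && (n == 0)%N by rewrite -!leqn0 -geq_max -/p p0.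
  by subst m n; rewrite /= !big_ord0 expr0 invr1 mul1e.
have mI : measurable I := measurable_dyadic_interval k1 l.
have mJ : measurable J := measurable_dyadic_interval k2 l.
have h0 : 0 < h by apply: exprz_gt0.
have [M M0 GM'] : exists2 M : R, 0 <= M & forall i j x y, I x -> J y -> G i j x y <= M.
  have [|M M0 GM'] := finite_family_common_bound
    (f := fun ij (z : R * R) => G ij.1 ij.2 z.1 z.2) (P := fun z => I z.1 /\ J z.2).
    by move=> [i j]; have [M GM_ij] := GM i j; exists M => -[x y] [/= Ix Jy]; exact: GM_ij.
  by exists M => // i j x y Ix Jy; exact: (GM' (i, j) (x, y)).
have := iter_int_prod_le_prod_mean_root mI mJ
  (lebesgue_measure_dyadic_interval R k1 l) (lebesgue_measure_dyadic_interval R k2 l)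
  h0 h0 p_gt0 (leq_maxl m n) (leq_maxr m n) (zero_ext_ge0 G0) (zero_ext_le GM' M0)
  (@zero_ext_outl R m n I J G) (@zero_ext_outr R m n I J G) (measurable_zero_ext mI mJ mG).
have -> : iter_int I m (fun x => iter_int J n (fun y =>
    (\prod_(i < m) \prod_(j < n) zero_ext I J G i j (x i) (y j))%:E)) =
    iter_int I m (fun x => iter_int J n (fun y =>
    (\prod_(i < m) \prod_(j < n) (G i j (x i) (y j))%:E)%E)).
  apply: eq_iter_int => x Ix; apply: eq_iter_int => y Jy.
  rewrite -prodEFin; apply: eq_bigr => i _; rewrite -prodEFin; apply: eq_bigr => j _.
  by rewrite zero_extE //; [exact: Ix | exact: Jy].
under eq_bigr do under eq_bigr do under eq_integral => z /[1!inE] -[Iz Jz]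
  do rewrite zero_extE //.
by rewrite exprD expr2.
Qed.
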